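(* Let $f:\mathbb{N}\rightharpoonup\mathbb{N}$ be a partial function. Then the pca $\mathcal{K}_1^f$ is isomorphic to the pca $\mathcal{K}_1[f]$.
   Context: $\mathcal{K}_1$ is Kleene's first pca: underlying set $\mathbb{N}$, application $nm\simeq\varphi_n(m)$ where $\varphi_n$ is the $n$-th partial recursive function. $\mathcal{K}_1^f$ is the pca on $\mathbb{N}$ with application $nm\simeq\varphi^f_n(m)$, where $\varphi^f_n$ is the $n$-th partial function computable with an oracle for $f$. A pca is a set with a partial binary application admitting $K,S$ with $Kab=a$, $Sab{\downarrow}$, $Sabc\simeq ac(bc)$; each pca has fixed Booleans $\top,\bot$, pairing $p$ with projections $p_0,p_1$, and a coding $[u_0,\dots,u_{n-1}]$ of finite sequences with concatenation $\ast$. For a pca $A$ and partial $f:A\rightharpoonup A$, the pca $A[f]$ has underlying set $A$; an $f$-dialogue between $a,b$ is a code $u=[u_0,\dots,u_{n-1}]$ such that for each $i<n$ there is $v_i$ with $a\cdot([b]\ast[u_0,\dots,u_{i-1}])=p\bot v_i$ and $f(v_i)$ defined and equal to $u_i$; and $a\cdot^f b=c$ iff there is an $f$-dialogue $u$ between $a,b$ with $a\cdot([b]\ast u)=p\top c$. An applicative morphism $\gamma:A\to B$ is a function from $A$ to nonempty subsets of $B$ with some $r\in B$ such that $aa'{\downarrow}$, $b\in\gamma(a)$, $b'\in\gamma(a')$ imply $rbb'{\downarrow}$ and $rbb'\in\gamma(aa')$; composition is $(\delta\gamma)(a)=\bigcup_{b\in\gamma(a)}\delta(b)$, identities are $a\mapsto\{a\}$.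 Pcas $A,B$ are isomorphic if there are applicative morphisms $\gamma:A\to B$, $\delta:B\to A$ whose composites $\delta\gamma$, $\gamma\delta$ equal the identity morphisms. *)

From Stdlib Require Import Arith List Cantor.
Import ListNotations.

(* A partial binary application on a set A is represented by a         *)
(* relation  app a b c  meaning  "a.b is defined and equals c".        *)

Record PAS := { carrier : Type; app : carrier -> carrier -> carrier -> Prop }.

Definition app2 (A : PAS) (a b c d : carrier A) : Prop :=
  exists e, app A a b e /\ app A e c d.

(* gamma : A -> nonempty subsets of B, tracked by r *)
Definition applicative_morphism (A B : PAS)
  (gamma : carrier A -> carrier B -> Prop) : Prop :=
  (forall a, exists b, gamma a b) /\
  exists r : carrier B,
    forall a a' c b b', app A a a' c -> gamma a b -> gamma a' b' ->
      exists d, app2 B r b b' d /\ gamma c d.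

Definition comp_morph {A B C : Type} (delta : B -> C -> Prop)
  (gamma : A -> B -> Prop) : A -> C -> Prop :=
  fun a c => exists b, gamma a b /\ delta b c.

Definition id_morph (A : Type) : A -> A -> Prop := fun a a' => a' = a.

Definition morph_eq {A B : Type} (g h : A -> B -> Prop) : Prop :=
  forall a b, g a b <-> h a b.

Definition pca_isomorphic (A B : PAS) : Prop :=
  exists (gamma : carrier A -> carrier B -> Prop)
         (delta : carrier B -> carrier A -> Prop),
    applicative_morphism A B gamma /\ applicative_morphism B A delta /\
    morph_eq (comp_morph delta gamma) (id_morph (carrier A)) /\
    morph_eq (comp_morph gamma delta) (id_morph (carrier B)).

(* Unary mu-recursive functions over nat, multi-argument functions     *)
(* being handled through the Cantor pairing  <x,y> = Cantor.to_nat.   *)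

Definition cpair (x y : nat) : nat := Cantor.to_nat (x, y).

Inductive code : Type :=
| cZero
| cSucc
| cId
| cFst
| cSnd
| cOracle
| cPair (F G : code)
| cComp (F G : code)
| cRec  (F G : code)         (* h<x,0> = F x ; h<x,n+1> = G<<x,n>, h<x,n>> *)
| cMu   (F : code).          (* x |-> least n with F<x,n> = 0 (all earlier defined) *)

Inductive eval (f : nat -> option nat) : code -> nat -> nat -> Prop :=
| ev_zero x : eval f cZero x 0
| ev_succ x : eval f cSucc x (S x)
| ev_id x : eval f cId x x
| ev_fst x : eval f cFst x (fst (Cantor.of_nat x))
| ev_snd x : eval f cSnd x (snd (Cantor.of_nat x))
| ev_oracle x y : f x = Some y -> eval f cOracle x y
| ev_pair F G x y z : eval f F x y -> eval f G x z -> eval f (cPair F G) x (cpair y z)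
| ev_comp F G x y z : eval f G x y -> eval f F y z -> eval f (cComp F G) x z
| ev_rec0 F G x z y : Cantor.of_nat z = (x, 0) -> eval f F x y ->
    eval f (cRec F G) z y
| ev_recS F G x n z w y : Cantor.of_nat z = (x, S n) ->
    eval f (cRec F G) (cpair x n) w ->
    eval f G (cpair (cpair x n) w) y -> eval f (cRec F G) z y
| ev_mu F x n : eval f F (cpair x n) 0 ->
    (forall m, m < n -> exists k, eval f F (cpair x m) (S k)) ->
    eval f (cMu F) x n.

(* Goedel numbering of codes: 0 codes cZero; n+1 = 10*q + t codes a
   constructor selected by t, with arguments decoded from q
   (via Cantor unpairing for binary constructors). Every argument is
   decoded from a strictly smaller number, so fuel n+1 suffices. *)
Fixpoint decode_fuel (fuel n : nat) : code :=
  match fuel with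
  | 0 => cZero
  | S k =>
    match n with
    | 0 => cZero
    | S m =>
      let q := m / 10 in
      let ab := Cantor.of_nat q in
      match m mod 10 with
      | 0 => cZero
      | 1 => cSucc
      | 2 => cId
      | 3 => cFst
      | 4 => cSnd
      | 5 => cOracle
      | 6 => cPair (decode_fuel k (fst ab)) (decode_fuel k (snd ab))
      | 7 => cComp (decode_fuel k (fst ab)) (decode_fuel k (snd ab))
      | 8 => cRec (decode_fuel k (fst ab)) (decode_fuel k (snd ab))
      | _ => cMu (decode_fuel k q)
      end
    end
  end.

Definition decode (n : nat) : code := decode_fuel (S n) n.

Definition phi (f : nat -> option nat) (n m y : nat) : Prop := eval f (decode n) m y.

Definition K1f (f : nat -> option nat) : PAS := {| carrier := nat; app := phi f |}.

(* K_1 : plain partial recursive functions; a code using the oracle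
   with the nowhere-defined oracle just diverges at oracle calls, so
   phi_n ranges over exactly the partial recursive functions. *)
Definition K1 : PAS := K1f (fun _ => None).

(* Coding of finite sequences in K_1 (a fixed recursive bijection
   list nat -> nat): [] = 0, [x; l] = 1 + <x, [l]>. Concatenation
   of codes is  code l1 * code l2 = code (l1 ++ l2). *)
Fixpoint seqcode (l : list nat) : nat :=
  match l with
  | [] => 0
  | x :: l' => S (cpair x (seqcode l'))
  end.

Definition is_booleans (A : PAS) (T F : carrier A) : Prop :=
  forall a b, app2 A T a b a /\ app2 A F a b b.

Definition is_pairing (A : PAS) (p : carrier A) : Prop :=
  (forall a b, exists c, app2 A p a b c) /\
  exists p0 p1 : carrier A, forall a b c, app2 A p a b c ->
     app A p0 c a /\ app A p1 c b.

(* f-dialogue between a and b, with u = seqcode l, l = [u_0;...;u_{n-1}] *)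
Definition dialogue (T F p : nat) (f : nat -> option nat) (a b : nat)
  (l : list nat) : Prop :=
  forall i, i < length l ->
    exists v w, app K1 a (seqcode (b :: firstn i l)) w /\
                app2 K1 p F v w /\ f v = Some (nth i l 0).

Definition app_rel (T F p : nat) (f : nat -> option nat) (a b c : nat) : Prop :=
  exists l w, dialogue T F p f a b l /\
              app K1 a (seqcode (b :: l)) w /\ app2 K1 p T c w.

Definition K1rel (T F p : nat) (f : nat -> option nat) : PAS :=
  {| carrier := nat; app := app_rel T F p f |}.

From Pilot Require Import Defs.
From Stdlib Require Import Arith List Cantor Lia.
Import ListNotations.

(* Both morphisms are the identity on the natural numbers; only the realizers need work.

   From K1^f to K1[f]: an oracle computation is simulated by an abstract machine with an explicit
   stack, whose step function is primitive recursive and which, instead of calling the oracle,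
   consumes answers from a list and halts when the list runs out.  On [a'] * u, the K1-code that
   runs code a on a' to a halt (an unbounded search) replies p F v when the machine stops at a
   query v and p T c when the computation returns c; so the queries and answers of a terminating
   computation of phi^f_a(a') = c form an f-dialogue ending in c.  The realizer turns a into the
   number of this code, built around T a, which is constantly a.

   From K1[f] to K1^f: given b and b', an oracle code runs the dialogue of b with b' itself,
   applying b to [b'] * u, asking the oracle at v whenever the reply is p F v, appending the
   answer to u, and stopping at the first reply p T c. *)


Definition pfst (n : nat) : nat := fst (Cantor.of_nat n).
Definition psnd (n : nat) : nat := snd (Cantor.of_nat n).
Arguments pfst : simpl never.
Arguments psnd : simpl never.
Arguments cpair : simpl never.

Lemma of_nat_cpair a b : Cantor.of_nat (cpair a b) = (a, b).
Proof. apply Cantor.cancel_of_to. Qed.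

Lemma pfst_cpair a b : pfst (cpair a b) = a.
Proof. unfold pfst. now rewrite of_nat_cpair. Qed.

Lemma psnd_cpair a b : psnd (cpair a b) = b.
Proof. unfold psnd. now rewrite of_nat_cpair. Qed.

Lemma cpair_pfst_psnd n : cpair (pfst n) (psnd n) = n.
Proof.
  unfold pfst, psnd, cpair. rewrite <- (Cantor.cancel_to_of n) at 3.
  now destruct (Cantor.of_nat n).
Qed.

Lemma add_le_cpair a b : a + b <= cpair a b.
Proof. unfold cpair. pose proof (Cantor.to_nat_non_decreasing a b). lia. Qed.

Lemma pfst_le n : pfst n <= n.
Proof. rewrite <- (cpair_pfst_psnd n) at 2. pose proof (add_le_cpair (pfst n) (psnd n)). lia. Qed.

Lemma psnd_le n : psnd n <= n.
Proof. rewrite <- (cpair_pfst_psnd n) at 2. pose proof (add_le_cpair (pfst n) (psnd n)). lia. Qed.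

(** * Gödel numbering of codes *)

Lemma decode_fuel_enough k1 k2 n : n < k1 -> n < k2 -> decode_fuel k1 n = decode_fuel k2 n.
Proof.
  revert k2 n; induction k1 as [|k1 IH]; intros [|k2] n H1 H2; try lia.
  destruct n as [|m]; [reflexivity|]. cbn [decode_fuel].
  assert (m / 10 <= m) by (apply Nat.Div0.div_le_upper_bound; lia).
  pose proof (pfst_le (m / 10)); pose proof (psnd_le (m / 10)).
  unfold pfst, psnd in *.
  rewrite (IH k2 (fst _)), (IH k2 (snd _)), (IH k2 (m / 10)) by lia. reflexivity.
Qed.

Definition decode_step (dec : nat -> code) (m : nat) : code :=
  match m mod 10 with
  | 0 => cZero | 1 => cSucc | 2 => cId | 3 => cFst | 4 => cSnd | 5 => cOracle
  | 6 => cPair (dec (pfst (m / 10))) (dec (psnd (m / 10)))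
  | 7 => cComp (dec (pfst (m / 10))) (dec (psnd (m / 10)))
  | 8 => cRec (dec (pfst (m / 10))) (dec (psnd (m / 10)))
  | _ => cMu (dec (m / 10))
  end.

Lemma decode_succ m : decode (S m) = decode_step decode m.
Proof.
  change (decode_step (decode_fuel (S m)) m = decode_step decode m).
  assert (m / 10 <= m) by (apply Nat.Div0.div_le_upper_bound; lia).
  pose proof (pfst_le (m / 10)); pose proof (psnd_le (m / 10)).
  unfold decode_step, decode.
  rewrite <- (decode_fuel_enough (S m) (S (pfst (m / 10)))),
    <- (decode_fuel_enough (S m) (S (psnd (m / 10)))),
    <- (decode_fuel_enough (S m) (S (m / 10))) by lia.
  reflexivity.
Qed.

Lemma decode_digit q t : t < 10 -> decode (S (10 * q + t)) =
  match t with
  | 0 => cZero | 1 => cSucc | 2 => cId | 3 => cFst | 4 => cSnd | 5 => cOracle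
  | 6 => cPair (decode (pfst q)) (decode (psnd q))
  | 7 => cComp (decode (pfst q)) (decode (psnd q))
  | 8 => cRec (decode (pfst q)) (decode (psnd q))
  | _ => cMu (decode q)
  end.
Proof.
  intro Ht. rewrite decode_succ; unfold decode_step.
  replace ((10 * q + t) mod 10) with t by (apply (Nat.mod_unique _ _ q); lia).
  replace ((10 * q + t) / 10) with q by (apply (Nat.div_unique _ _ _ t); lia).
  reflexivity.
Qed.

Fixpoint encode (c : code) : nat :=
  match c with
  | cZero => 0 | cSucc => 2 | cId => 3 | cFst => 4 | cSnd => 5 | cOracle => 6
  | cPair F G => S (10 * cpair (encode F) (encode G) + 6)
  | cComp F G => S (10 * cpair (encode F) (encode G) + 7)
  | cRec F G => S (10 * cpair (encode F) (encode G) + 8)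
  | cMu F => S (10 * encode F + 9)
  end.

Lemma decode_pair_num n1 n2 : decode (S (10 * cpair n1 n2 + 6)) = cPair (decode n1) (decode n2).
Proof. rewrite decode_digit by lia. now rewrite pfst_cpair, psnd_cpair. Qed.

Lemma decode_comp_num n1 n2 : decode (S (10 * cpair n1 n2 + 7)) = cComp (decode n1) (decode n2).
Proof. rewrite decode_digit by lia. now rewrite pfst_cpair, psnd_cpair. Qed.

Lemma decode_rec_num n1 n2 : decode (S (10 * cpair n1 n2 + 8)) = cRec (decode n1) (decode n2).
Proof. rewrite decode_digit by lia. now rewrite pfst_cpair, psnd_cpair. Qed.

Lemma decode_mu_num n : decode (S (10 * n + 9)) = cMu (decode n).
Proof. now rewrite decode_digit by lia. Qed.

Lemma decode_encode c : decode (encode c) = c.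
Proof.
  induction c; try reflexivity; cbn [encode];
    rewrite ?decode_pair_num, ?decode_comp_num, ?decode_rec_num, ?decode_mu_num; congruence.
Qed.

Section EvalInd.
Variable f : nat -> option nat.
Variable P : code -> nat -> nat -> Prop.
Hypothesis Pzero : forall x, P cZero x 0.
Hypothesis Psucc : forall x, P cSucc x (S x).
Hypothesis Pid : forall x, P cId x x.
Hypothesis Pfst : forall x, P cFst x (fst (Cantor.of_nat x)).
Hypothesis Psnd : forall x, P cSnd x (snd (Cantor.of_nat x)).
Hypothesis Poracle : forall x y, f x = Some y -> P cOracle x y.
Hypothesis Ppair : forall F G x y z,
  eval f F x y -> P F x y -> eval f G x z -> P G x z -> P (cPair F G) x (cpair y z).
Hypothesis Pcomp : forall F G x y z,
  eval f G x y -> P G x y -> eval f F y z -> P F y z -> P (cComp F G) x z.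
Hypothesis Prec0 : forall F G x z y,
  Cantor.of_nat z = (x, 0) -> eval f F x y -> P F x y -> P (cRec F G) z y.
Hypothesis PrecS : forall F G x n z w y, Cantor.of_nat z = (x, S n) ->
  eval f (cRec F G) (cpair x n) w -> P (cRec F G) (cpair x n) w ->
  eval f G (cpair (cpair x n) w) y -> P G (cpair (cpair x n) w) y -> P (cRec F G) z y.
Hypothesis Pmu : forall F x n, eval f F (cpair x n) 0 -> P F (cpair x n) 0 ->
  (forall m, m < n -> exists k, eval f F (cpair x m) (S k) /\ P F (cpair x m) (S k)) ->
  P (cMu F) x n.

(* The generated [eval_ind] gives no hypothesis for the earlier values in [ev_mu]. *)
Fixpoint eval_ind_nested c x y (H : eval f c x y) {struct H} : P c x y.
Proof.
  destruct H as [| | | | | x y Hf | | | | | F x n H0 Hlt].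
  - apply Pzero.
  - apply Psucc.
  - apply Pid.
  - apply Pfst.
  - apply Psnd.
  - now apply Poracle.
  - apply Ppair; auto.
  - eapply Pcomp; eauto.
  - eapply Prec0; eauto.
  - eapply PrecS; eauto.
  - apply Pmu; auto. intros m Hm. destruct (Hlt m Hm) as [k Hk].
    exists k. split; [exact Hk | exact (eval_ind_nested _ _ _ Hk)].
Defined.
End EvalInd.

Lemma eval_functional f c x y1 y2 : eval f c x y1 -> eval f c x y2 -> y1 = y2.
Proof.
  intro H; revert y2.
  induction H using eval_ind_nested; intros y2 H2; inversion H2; subst; try congruence.
  - f_equal; auto.
  - match goal with Hy : eval _ G x ?y' |- _ => apply IHeval1 in Hy; subst end; auto.
  - match goal with E : Cantor.of_nat z = _ |- _ => rewrite H in E; injection E as <- end; auto.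
  - match goal with E : Cantor.of_nat z = _ |- _ => rewrite H in E; injection E as <- <- end.
    match goal with Hw : eval _ (cRec F G) _ ?w' |- _ => apply IHeval1 in Hw; subst end; auto.
  - match goal with Hz : eval _ F (cpair x y2) 0, Hn : forall m, m < y2 -> _ |- _ =>
      rename Hz into Hzero2; rename Hn into Hlt2 end.
    destruct (Nat.lt_trichotomy n y2) as [Hl | [He | Hl]]; auto.
    + destruct (Hlt2 n Hl) as [k Hk]. apply IHeval in Hk. discriminate.
    + destruct (H0 y2 Hl) as [k [_ Hk]]. apply Hk in Hzero2. discriminate.
Qed.

Lemma eval_no_oracle f c x y : eval (fun _ => None) c x y -> eval f c x y.
Proof.
  intro H; induction H using eval_ind_nested; try (econstructor; eauto; fail).
  - discriminate.
  - constructor; auto. intros m Hm. destruct (H0 m Hm) as [k [_ Hk]]. eauto.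
Qed.

(** * A library of total codes *)

Definition computes (C : code) (g : nat -> nat) := forall f x, eval f C x (g x).
Definition computes2 (C : code) (g : nat -> nat -> nat) :=
  forall f a b, eval f C (cpair a b) (g a b).

Lemma eval_fst_cpair f a b : eval f cFst (cpair a b) a.
Proof. pose proof (ev_fst f (cpair a b)) as H. now rewrite of_nat_cpair in H. Qed.

Lemma eval_snd_cpair f a b : eval f cSnd (cpair a b) b.
Proof. pose proof (ev_snd f (cpair a b)) as H. now rewrite of_nat_cpair in H. Qed.

Lemma eval_comp_pair f C g A B x a b : computes2 C g ->
  eval f A x a -> eval f B x b -> eval f (cComp C (cPair A B)) x (g a b).
Proof. intros HC HA HB. eapply ev_comp; [apply ev_pair; eauto | apply HC]. Qed.

Lemma eval_rec_iter f F G x n (h : nat -> nat) :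
  eval f F x (h 0) ->
  (forall k, k < n -> eval f G (cpair (cpair x k) (h k)) (h (S k))) ->
  eval f (cRec F G) (cpair x n) (h n).
Proof.
  intros H0 HS. induction n as [|n IH].
  - eapply ev_rec0; [apply of_nat_cpair | exact H0].
  - eapply ev_recS; [apply of_nat_cpair | apply IH; auto | apply HS; lia].
Qed.

(* Primitive recursion on the value of [t], the step ignoring the recursive call. *)
Definition cIfz (t A B : code) : code :=
  cComp (cRec A (cComp B (cComp cFst cFst))) (cPair cId t).

Lemma eval_ifz_zero f t A B x y : eval f t x 0 -> eval f A x y -> eval f (cIfz t A B) x y.
Proof.
  intros Ht HA. eapply ev_comp; [apply ev_pair; [apply ev_id | exact Ht] |].
  apply (eval_rec_iter f A _ x 0 (fun _ => y)); [exact HA | lia].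
Qed.

Lemma eval_ifz_succ f t A B x k a y :
  eval f t x (S k) -> eval f A x a -> eval f B x y -> eval f (cIfz t A B) x y.
Proof.
  intros Ht HA HB. eapply ev_comp; [apply ev_pair; [apply ev_id | exact Ht] |].
  apply (eval_rec_iter f A _ x (S k) (fun j => match j with 0 => a | S _ => y end));
    [exact HA |].
  intros j _. eapply ev_comp; [| exact HB].
  eapply ev_comp; apply eval_fst_cpair.
Qed.

Definition cRecOn (B G : code) : code := cComp (cRec B G) (cPair cZero cId).

Lemma eval_rec_on f B G (h : nat -> nat) x :
  eval f B 0 (h 0) -> (forall k, eval f G (cpair (cpair 0 k) (h k)) (h (S k))) ->
  eval f (cRecOn B G) x (h x).
Proof.
  intros H0 HS. eapply ev_comp; [apply ev_pair; [apply ev_zero | apply ev_id] |].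
  apply (eval_rec_iter f _ _ 0 x h); auto.
Qed.

Definition cPred : code := cRecOn cZero (cComp cSnd cFst).

Lemma cPred_computes : computes cPred pred.
Proof.
  intros f x. apply eval_rec_on; [apply ev_zero |].
  intro k. eapply ev_comp; [apply eval_fst_cpair | apply eval_snd_cpair].
Qed.

Definition cAdd : code := cRec cId (cComp cSucc cSnd).

Lemma cAdd_computes : computes2 cAdd Nat.add.
Proof.
  intros f a b. apply (eval_rec_iter f _ _ a b (Nat.add a)).
  - rewrite Nat.add_0_r. apply ev_id.
  - intros k _. eapply ev_comp; [apply eval_snd_cpair |].
    rewrite Nat.add_succ_r. apply ev_succ.
Qed.

Definition cSub : code := cRec cId (cComp cPred cSnd).

Lemma cSub_computes : computes2 cSub Nat.sub.
Proof.
  intros f a b. apply (eval_rec_iter f _ _ a b (Nat.sub a)).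
  - rewrite Nat.sub_0_r. apply ev_id.
  - intros k _. eapply ev_comp; [apply eval_snd_cpair |].
    replace (a - S k) with (pred (a - k)) by lia. apply cPred_computes.
Qed.

Definition cConst (n : nat) : code := Nat.iter n (cComp cSucc) cZero.

Lemma cConst_computes n : computes (cConst n) (fun _ => n).
Proof.
  intros f x. induction n as [|n IH]; [apply ev_zero |].
  eapply ev_comp; [exact IH | apply ev_succ].
Qed.

Definition eqb01 (a b : nat) : nat := if a =? b then 0 else 1.

Definition cEqb : code :=
  cIfz (cComp cAdd (cPair cSub (cComp cSub (cPair cSnd cFst)))) cZero (cConst 1).

Lemma cEqb_computes : computes2 cEqb eqb01.
Proof.
  intros f a b.
  assert (Hdist : eval f (cComp cAdd (cPair cSub (cComp cSub (cPair cSnd cFst))))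
                    (cpair a b) ((a - b) + (b - a))).
  { apply eval_comp_pair; [apply cAdd_computes | apply cSub_computes |].
    apply eval_comp_pair; [apply cSub_computes | apply eval_snd_cpair | apply eval_fst_cpair]. }
  unfold eqb01; destruct (Nat.eqb_spec a b) as [<- | Hne].
  - apply eval_ifz_zero; [| apply ev_zero]. now rewrite Nat.sub_diag in Hdist.
  - destruct (a - b + (b - a)) as [|k] eqn:E; [lia |].
    eapply eval_ifz_succ; [exact Hdist | apply ev_zero | apply cConst_computes].
Qed.

Definition cMul10 : code := cRecOn cZero (cComp cAdd (cPair (cConst 10) cSnd)).

Lemma cMul10_computes : computes cMul10 (Nat.mul 10).
Proof.
  intros f x. apply (eval_rec_on f _ _ (Nat.mul 10)); [apply ev_zero |].
  intro k. replace (10 * S k) with (10 + 10 * k) by lia.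
  apply eval_comp_pair; [apply cAdd_computes | apply cConst_computes | apply eval_snd_cpair].
Qed.

Lemma divmod10_succ j : cpair (S j / 10) (S j mod 10) =
  if j mod 10 =? 9 then cpair (S (j / 10)) 0 else cpair (j / 10) (S (j mod 10)).
Proof.
  pose proof (Nat.div_mod j 10 ltac:(lia)). pose proof (Nat.mod_upper_bound j 10 ltac:(lia)).
  destruct (Nat.eqb_spec (j mod 10) 9); f_equal.
  - symmetry; apply (Nat.div_unique _ _ _ 0); lia.
  - symmetry; apply (Nat.mod_unique _ _ (S (j / 10))); lia.
  - symmetry; apply (Nat.div_unique _ _ _ (S (j mod 10))); lia.
  - symmetry; apply (Nat.mod_unique _ _ (j / 10)); lia.
Qed.

(* One step of counting in base 10: [<q, r>] goes to [<q+1, 0>] if [r = 9], else to [<q, r+1>]. *)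
Definition cDigitStep : code :=
  cIfz (cComp cEqb (cPair cSnd (cConst 9)))
       (cPair (cComp cSucc cFst) cZero)
       (cPair cFst (cComp cSucc cSnd)).

Definition cDivMod10 : code := cRecOn (cPair cZero cZero) (cComp cDigitStep cSnd).

Lemma cDivMod10_computes : computes cDivMod10 (fun n => cpair (n / 10) (n mod 10)).
Proof.
  intros f x. apply (eval_rec_on f _ _ (fun n => cpair (n / 10) (n mod 10)));
    [apply ev_pair; apply ev_zero |].
  intro k. eapply ev_comp; [apply eval_snd_cpair |].
  assert (Htest : eval f (cComp cEqb (cPair cSnd (cConst 9))) (cpair (k / 10) (k mod 10))
                    (eqb01 (k mod 10) 9)).
  { apply eval_comp_pair; [apply cEqb_computes | apply eval_snd_cpair | apply cConst_computes]. }
  rewrite divmod10_succ.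
  unfold eqb01 in Htest; destruct (k mod 10 =? 9).
  - apply eval_ifz_zero; [exact Htest |].
    apply ev_pair; [eapply ev_comp; [apply eval_fst_cpair | apply ev_succ] | apply ev_zero].
  - eapply eval_ifz_succ; [exact Htest | |].
    + apply ev_pair; [eapply ev_comp; [apply eval_fst_cpair | apply ev_succ] | apply ev_zero].
    + apply ev_pair; [apply eval_fst_cpair | eapply ev_comp; [apply eval_snd_cpair | apply ev_succ]].
Qed.

Inductive expr : Type :=
| EVar | EZero | ESucc (e : expr) | EFst (e : expr) | ESnd (e : expr) | EPair (a b : expr)
| EIfz (t a b : expr) | EPred (e : expr) | EAdd (a b : expr) | ESub (a b : expr)
| EEqb (a b : expr) | EDiv10 (e : expr) | EMod10 (e : expr) | EMul10 (e : expr)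
| EIter (s i n : expr).

Fixpoint denote (e : expr) (x : nat) : nat :=
  match e with
  | EVar => x
  | EZero => 0
  | ESucc e => S (denote e x)
  | EFst e => pfst (denote e x)
  | ESnd e => psnd (denote e x)
  | EPair a b => cpair (denote a x) (denote b x)
  | EIfz t a b => match denote t x with 0 => denote a x | S _ => denote b x end
  | EPred e => pred (denote e x)
  | EAdd a b => denote a x + denote b x
  | ESub a b => denote a x - denote b x
  | EEqb a b => eqb01 (denote a x) (denote b x)
  | EDiv10 e => denote e x / 10
  | EMod10 e => denote e x mod 10
  | EMul10 e => 10 * denote e x
  | EIter s i n => Nat.iter (denote n x) (denote s) (denote i x)
  end.

Fixpoint compile (e : expr) : code :=
  match e with
  | EVar => cId
  | EZero => cZero
  | ESucc e => cComp cSucc (compile e)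
  | EFst e => cComp cFst (compile e)
  | ESnd e => cComp cSnd (compile e)
  | EPair a b => cPair (compile a) (compile b)
  | EIfz t a b => cIfz (compile t) (compile a) (compile b)
  | EPred e => cComp cPred (compile e)
  | EAdd a b => cComp cAdd (cPair (compile a) (compile b))
  | ESub a b => cComp cSub (cPair (compile a) (compile b))
  | EEqb a b => cComp cEqb (cPair (compile a) (compile b))
  | EDiv10 e => cComp cFst (cComp cDivMod10 (compile e))
  | EMod10 e => cComp cSnd (cComp cDivMod10 (compile e))
  | EMul10 e => cComp cMul10 (compile e)
  | EIter s i n => cComp (cRec (compile i) (cComp (compile s) cSnd)) (cPair cId (compile n))
  end.

Lemma compile_computes e : computes (compile e) (denote e).
Proof.
  induction e; intros f x; cbn [compile denote].
  - apply ev_id.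
  - apply ev_zero.
  - eapply ev_comp; [apply IHe | apply ev_succ].
  - eapply ev_comp; [apply IHe | apply ev_fst].
  - eapply ev_comp; [apply IHe | apply ev_snd].
  - apply ev_pair; auto.
  - destruct (denote e1 x) eqn:E.
    + apply eval_ifz_zero; auto. rewrite <- E. auto.
    + eapply eval_ifz_succ; [rewrite <- E; apply IHe1 | apply IHe2 | apply IHe3].
  - eapply ev_comp; [apply IHe | apply cPred_computes].
  - apply eval_comp_pair; auto using cAdd_computes.
  - apply eval_comp_pair; auto using cSub_computes.
  - apply eval_comp_pair; auto using cEqb_computes.
  - eapply ev_comp; [eapply ev_comp; [apply IHe | apply cDivMod10_computes] | apply eval_fst_cpair].
  - eapply ev_comp; [eapply ev_comp; [apply IHe | apply cDivMod10_computes] | apply eval_snd_cpair].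
  - eapply ev_comp; [apply IHe | apply cMul10_computes].
  - eapply ev_comp; [apply ev_pair; [apply ev_id | apply IHe3] |].
    apply (eval_rec_iter f _ _ x (denote e3 x) (fun j => Nat.iter j (denote e1) (denote e2 x))).
    + apply IHe2.
    + intros k _. eapply ev_comp; [apply eval_snd_cpair | apply IHe1].
Qed.

Definition EConst (n : nat) : expr := Nat.iter n ESucc EZero.

Lemma denote_const n x : denote (EConst n) x = n.
Proof. induction n as [|n IH]; cbn; auto. Qed.

(** * An abstract machine running oracle computations against a list of answers *)

(* A state [<t, <a, <k, l>>>] consists of a tag [t], a register [a], a stack [k] and the
   [seqcode] [l] of the oracle answers still available.  Tag 0: evaluate code [pfst a] on
   [psnd a]; tag 1: return [a] to the top frame of [k]; tag 2: halted with result [a];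
   tag 3: halted, asking the oracle at [a]. *)
Definition state t a k l := cpair t (cpair a (cpair k l)).
Definition push fr k := S (cpair fr k).
Definition frPairL G x := cpair 0 (cpair G x).
Definition frPairR y := cpair 1 y.
Definition frComp F := cpair 2 F.
Definition frRec G x n N := cpair 3 (cpair G (cpair x (cpair n N))).
Definition frMu F x n := cpair 4 (cpair F (cpair x n)).

Fixpoint ESwitch (e : expr) (cases : list expr) (default : expr) : expr :=
  match cases with
  | [] => default
  | b :: cases => EIfz e b (ESwitch (EPred e) cases default)
  end.

Definition EState t a k l := EPair (EConst t) (EPair a (EPair k l)).
Definition EPush fr k := ESucc (EPair fr k).
Definition EFrame tag d := EPair (EConst tag) d.

Definition ERegister := EFst (ESnd EVar).
Definition EStack := EFst (ESnd (ESnd EVar)).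
Definition EAnswers := ESnd (ESnd (ESnd EVar)).

(* Dispatches on the last decimal digit of the code number, as [decode_step] does. *)
Definition EEvalStep :=
  let c := EFst ERegister in let x := ESnd ERegister in
  let q := EDiv10 (EPred c) in
  let K := EStack in let L := EAnswers in
  EIfz c (EState 1 EZero K L) (ESwitch (EMod10 (EPred c)) [
    EState 1 EZero K L;
    EState 1 (ESucc x) K L;
    EState 1 x K L;
    EState 1 (EFst x) K L;
    EState 1 (ESnd x) K L;
    EIfz L (EState 3 x K L) (EState 1 (EFst (EPred L)) K (ESnd (EPred L)));
    EState 0 (EPair (EFst q) x) (EPush (EFrame 0 (EPair (ESnd q) x)) K) L;
    EState 0 (EPair (ESnd q) x) (EPush (EFrame 2 (EFst q)) K) L;
    EState 0 (EPair (EFst q) (EFst x))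
      (EPush (EFrame 3 (EPair (ESnd q) (EPair (EFst x) (EPair EZero (ESnd x))))) K) L]
    (EState 0 (EPair q (EPair x EZero)) (EPush (EFrame 4 (EPair q (EPair x EZero))) K) L)).

Definition EReturnStep :=
  let v := ERegister in let K := EPred EStack in let L := EAnswers in
  let d := ESnd (EFst K) in let K' := ESnd K in
  EIfz EStack (EState 2 v EZero L) (ESwitch (EFst (EFst K)) [
    EState 0 d (EPush (EFrame 1 v) K') L;
    EState 1 (EPair d v) K' L;
    EState 0 (EPair d v) K' L;
    (let G := EFst d in let x := EFst (ESnd d) in
     let n := EFst (ESnd (ESnd d)) in let N := ESnd (ESnd (ESnd d)) in
     EIfz (EEqb n N) (EState 1 v K' L)
       (EState 0 (EPair G (EPair (EPair x n) v))
          (EPush (EFrame 3 (EPair G (EPair x (EPair (ESucc n) N)))) K') L))]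
    (let F := EFst d in let x := EFst (ESnd d) in let n := ESnd (ESnd d) in
     EIfz v (EState 1 n K' L)
       (EState 0 (EPair F (EPair x (ESucc n)))
          (EPush (EFrame 4 (EPair F (EPair x (ESucc n)))) K') L))).

Definition EStep := ESwitch (EFst EVar) [EEvalStep; EReturnStep] EVar.
Definition step := denote EStep.

Ltac compute_step :=
  unfold step, EStep, EEvalStep, EReturnStep, EState, EPush, EFrame, ERegister, EStack,
    EAnswers, state, push, frPairL, frPairR, frComp, frRec, frMu;
  cbn [denote ESwitch EConst Nat.iter];
  repeat progress (rewrite ?pfst_cpair, ?psnd_cpair; cbn [denote ESwitch EConst Nat.iter pred]).

Lemma step_return_empty v L : step (state 1 v 0 L) = state 2 v 0 L.
Proof. compute_step. reflexivity. Qed.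

Lemma step_return_pairL v G x K L :
  step (state 1 v (push (frPairL G x) K) L) = state 0 (cpair G x) (push (frPairR v) K) L.
Proof. compute_step. reflexivity. Qed.

Lemma step_return_pairR v y K L :
  step (state 1 v (push (frPairR y) K) L) = state 1 (cpair y v) K L.
Proof. compute_step. reflexivity. Qed.

Lemma step_return_comp v F K L :
  step (state 1 v (push (frComp F) K) L) = state 0 (cpair F v) K L.
Proof. compute_step. reflexivity. Qed.

Lemma step_return_rec_done v G x n K L :
  step (state 1 v (push (frRec G x n n) K) L) = state 1 v K L.
Proof. compute_step. unfold eqb01. now rewrite Nat.eqb_refl. Qed.

Lemma step_return_rec_next v G x n N K L : n <> N ->
  step (state 1 v (push (frRec G x n N) K) L) =
  state 0 (cpair G (cpair (cpair x n) v)) (push (frRec G x (S n) N) K) L.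
Proof. intro H. compute_step. unfold eqb01. now rewrite (proj2 (Nat.eqb_neq n N) H). Qed.

Lemma step_return_mu_zero F x n K L :
  step (state 1 0 (push (frMu F x n) K) L) = state 1 n K L.
Proof. compute_step. reflexivity. Qed.

Lemma step_return_mu_succ k F x n K L :
  step (state 1 (S k) (push (frMu F x n) K) L) =
  state 0 (cpair F (cpair x (S n))) (push (frMu F x (S n)) K) L.
Proof. compute_step. reflexivity. Qed.

Lemma step_halted t a k l : 2 <= t -> step (state t a k l) = state t a k l.
Proof. intro H. do 2 (destruct t; [lia |]). compute_step. reflexivity. Qed.

Lemma step_eval_num0 x K L : step (state 0 (cpair 0 x) K L) = state 1 0 K L.
Proof. compute_step. reflexivity. Qed.

Lemma step_eval_num m x K L : step (state 0 (cpair (S m) x) K L) =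
  match m mod 10 with
  | 0 => state 1 0 K L
  | 1 => state 1 (S x) K L
  | 2 => state 1 x K L
  | 3 => state 1 (pfst x) K L
  | 4 => state 1 (psnd x) K L
  | 5 => match L with 0 => state 3 x K L | S L' => state 1 (pfst L') K (psnd L') end
  | 6 => state 0 (cpair (pfst (m / 10)) x) (push (frPairL (psnd (m / 10)) x) K) L
  | 7 => state 0 (cpair (psnd (m / 10)) x) (push (frComp (pfst (m / 10))) K) L
  | 8 => state 0 (cpair (pfst (m / 10)) (pfst x)) (push (frRec (psnd (m / 10)) (pfst x) 0 (psnd x)) K) L
  | _ => state 0 (cpair (m / 10) (cpair x 0)) (push (frMu (m / 10) x 0) K) L
  end.
Proof.
  compute_step. destruct (m mod 10) as [|[|[|[|[|[|[|[|[|]]]]]]]]]; cbn [denote pred]; try reflexivity.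
  destruct L; reflexivity.
Qed.

Ltac step_eval_by_digit cn :=
  let H := fresh in let m := fresh in
  intro H; destruct cn as [|m]; [try discriminate H; apply step_eval_num0 |];
  rewrite decode_succ in H; unfold decode_step in H; rewrite step_eval_num;
  destruct (m mod 10) as [|[|[|[|[|[|[|[|[|]]]]]]]]]; try discriminate H; reflexivity.

Lemma step_eval_zero cn x K L : decode cn = cZero -> step (state 0 (cpair cn x) K L) = state 1 0 K L.
Proof. step_eval_by_digit cn. Qed.

Lemma step_eval_succ cn x K L : decode cn = cSucc -> step (state 0 (cpair cn x) K L) = state 1 (S x) K L.
Proof. step_eval_by_digit cn. Qed.

Lemma step_eval_id cn x K L : decode cn = cId -> step (state 0 (cpair cn x) K L) = state 1 x K L.
Proof. step_eval_by_digit cn. Qed.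

Lemma step_eval_fst cn x K L : decode cn = cFst -> step (state 0 (cpair cn x) K L) = state 1 (pfst x) K L.
Proof. step_eval_by_digit cn. Qed.

Lemma step_eval_snd cn x K L : decode cn = cSnd -> step (state 0 (cpair cn x) K L) = state 1 (psnd x) K L.
Proof. step_eval_by_digit cn. Qed.

Lemma step_eval_oracle cn x K L : decode cn = cOracle ->
  step (state 0 (cpair cn x) K L) =
  match L with 0 => state 3 x K L | S L' => state 1 (pfst L') K (psnd L') end.
Proof. step_eval_by_digit cn. Qed.

Ltac step_eval_node cn :=
  let H := fresh in let m := fresh in let E := fresh in
  intro H; destruct cn as [|m]; [discriminate H |];
  rewrite decode_succ in H; unfold decode_step in H;
  destruct (m mod 10) as [|[|[|[|[|[|[|[|[|]]]]]]]]] eqn:E; try discriminate H;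
  injection H as <- <-; do 2 eexists; split; [reflexivity |]; split; [reflexivity |];
  intros; rewrite step_eval_num, E; reflexivity.

Lemma step_eval_pair cn F G : decode cn = cPair F G ->
  exists Fn Gn, decode Fn = F /\ decode Gn = G /\ forall x K L,
    step (state 0 (cpair cn x) K L) = state 0 (cpair Fn x) (push (frPairL Gn x) K) L.
Proof. step_eval_node cn. Qed.

Lemma step_eval_comp cn F G : decode cn = cComp F G ->
  exists Fn Gn, decode Fn = F /\ decode Gn = G /\ forall x K L,
    step (state 0 (cpair cn x) K L) = state 0 (cpair Gn x) (push (frComp Fn) K) L.
Proof. step_eval_node cn. Qed.

Lemma step_eval_rec cn F G : decode cn = cRec F G ->
  exists Fn Gn, decode Fn = F /\ decode Gn = G /\ forall x K L,
    step (state 0 (cpair cn x) K L) =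
    state 0 (cpair Fn (pfst x)) (push (frRec Gn (pfst x) 0 (psnd x)) K) L.
Proof. step_eval_node cn. Qed.

Lemma step_eval_mu cn F : decode cn = cMu F ->
  exists Fn, decode Fn = F /\ forall x K L,
    step (state 0 (cpair cn x) K L) = state 0 (cpair Fn (cpair x 0)) (push (frMu Fn x 0) K) L.
Proof.
  intro H; destruct cn as [|m]; [discriminate H |].
  rewrite decode_succ in H; unfold decode_step in H.
  destruct (m mod 10) as [|[|[|[|[|[|[|[|[|]]]]]]]]] eqn:E; try discriminate H.
  injection H as <-. eexists; split; [reflexivity |].
  intros; rewrite step_eval_num, E; reflexivity.
Qed.

(** * Simulating evaluations on the machine *)

Definition reaches s s' := exists n, Nat.iter n step s = s'.

Lemma reaches_refl s : reaches s s.
Proof. now exists 0. Qed.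

Lemma reaches_trans s1 s2 s3 : reaches s1 s2 -> reaches s2 s3 -> reaches s1 s3.
Proof. intros [a Ha] [b Hb]. exists (b + a). rewrite Nat.iter_add. congruence. Qed.

Lemma reaches_step s1 s2 s3 : step s1 = s2 -> reaches s2 s3 -> reaches s1 s3.
Proof. intros H1 H2. apply (reaches_trans _ s2); [exists 1; exact H1 | exact H2]. Qed.

(* A trace lists the oracle queries of a run together with their answers.  States are
   parametrised by the answer list the machine is started with. *)
Definition trace := list (nat * nat).
Definition answers (tr : trace) : list nat := map snd tr.

Definition answered_by (f : nat -> option nat) (tr : trace) : Prop :=
  Forall (fun vu : nat * nat => f (fst vu) = Some (snd vu)) tr.

Definition runs (tr : trace) (s0 s1 : nat -> nat) : Prop :=
  forall L, reaches (s0 (seqcode (answers tr ++ L))) (s1 (seqcode L)).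

(* Given only the first [i] answers, the run stops asking the [i]-th query of the trace. *)
Definition asks (tr : trace) (s0 : nat -> nat) : Prop :=
  forall i, i < length tr -> exists K L,
    reaches (s0 (seqcode (answers (firstn i tr)))) (state 3 (fst (nth i tr (0, 0))) K L).

Lemma runs_app tr1 tr2 s0 s1 s2 : runs tr1 s0 s1 -> runs tr2 s1 s2 -> runs (tr1 ++ tr2) s0 s2.
Proof.
  intros H1 H2 L. unfold answers. rewrite map_app, <- app_assoc.
  eapply reaches_trans; [apply H1 | apply H2].
Qed.

Lemma asks_app tr1 tr2 s0 s1 : runs tr1 s0 s1 -> asks tr1 s0 -> asks tr2 s1 -> asks (tr1 ++ tr2) s0.
Proof.
  intros R1 A1 A2 i Hi. rewrite length_app in Hi.
  destruct (Nat.lt_ge_cases i (length tr1)) as [Hl | Hl].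
  - rewrite firstn_app, app_nth1 by lia.
    replace (i - length tr1) with 0 by lia. rewrite app_nil_r. apply A1, Hl.
  - rewrite firstn_app, firstn_all2, app_nth2 by lia.
    destruct (A2 (i - length tr1)) as [K [L HR]]; [lia |].
    exists K, L. eapply reaches_trans; [| exact HR].
    unfold answers. rewrite map_app. apply R1.
Qed.

Lemma runs_step tr s0 s1 s2 : (forall L, step (s0 L) = s1 L) -> runs tr s1 s2 -> runs tr s0 s2.
Proof. intros Hs H L. eapply reaches_step; [apply Hs | apply H]. Qed.

Lemma asks_step tr s0 s1 : (forall L, step (s0 L) = s1 L) -> asks tr s1 -> asks tr s0.
Proof.
  intros Hs H i Hi. destruct (H i Hi) as [K [L HR]].
  exists K, L. eapply reaches_step; [apply Hs | apply HR].
Qed.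

Lemma runs_nil s : runs [] s s.
Proof. intro L. apply reaches_refl. Qed.

Lemma runs_nil_step s0 s1 : (forall L, step (s0 L) = s1 L) -> runs [] s0 s1.
Proof. intro Hs. eapply runs_step; [exact Hs | apply runs_nil]. Qed.

Lemma asks_nil s : asks [] s.
Proof. intros i Hi. simpl in Hi. lia. Qed.

Lemma runs_snoc_nil tr s0 s1 s2 :
  runs tr s0 s1 -> (forall L, step (s1 L) = s2 L) -> runs tr s0 s2.
Proof.
  intros H Hs. rewrite <- (app_nil_r tr). eapply runs_app; [exact H | apply runs_nil_step, Hs].
Qed.

Definition machine_evaluates (tr : trace) (cn x y : nat) : Prop := forall K,
  runs tr (fun L => state 0 (cpair cn x) K L) (fun L => state 1 y K L) /\
  asks tr (fun L => state 0 (cpair cn x) K L).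

(* The loop of [cRec Fn Gn] on [<x, N>] after its [n]-th round, with result [y] so far. *)
Definition machine_recurses (tr : trace) (Fn Gn x n y : nat) : Prop := forall N, n <= N -> forall K,
  runs tr (fun L => state 0 (cpair Fn x) (push (frRec Gn x 0 N) K) L)
          (fun L => state 1 y (push (frRec Gn x n N) K) L) /\
  asks tr (fun L => state 0 (cpair Fn x) (push (frRec Gn x 0 N) K) L).

Definition simulated (f : nat -> option nat) (c : code) (x y : nat) : Prop :=
  exists tr, answered_by f tr /\
    (forall cn, decode cn = c -> machine_evaluates tr cn x y) /\
    (forall F G Fn Gn, c = cRec F G -> decode Fn = F -> decode Gn = G ->
       machine_recurses tr Fn Gn (pfst x) (psnd x) y).

Lemma simulated_leaf f c x y :
  (forall cn K L, decode cn = c -> step (state 0 (cpair cn x) K L) = state 1 y K L) ->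
  (forall F G, c <> cRec F G) -> simulated f c x y.
Proof.
  intros Hs Hc. exists []. split; [constructor |]. split.
  - intros cn Hcn K. split; [apply runs_nil_step; intro; apply Hs, Hcn | apply asks_nil].
  - intros F G Fn Gn E. now destruct (Hc F G E).
Qed.

Lemma simulated_oracle f x y : f x = Some y -> simulated f cOracle x y.
Proof.
  intro Hf. exists [(x, y)]. split; [repeat constructor; exact Hf |].
  split; [| discriminate].
  intros cn Hcn K. split.
  - intro L. eapply reaches_step; [apply step_eval_oracle, Hcn |].
    cbn [answers map app seqcode]. rewrite pfst_cpair, psnd_cpair. apply reaches_refl.
  - intros i Hi. replace i with 0 by (simpl in Hi; lia).
    exists K, 0. eapply reaches_step; [apply step_eval_oracle, Hcn | apply reaches_refl].
Qed.

Lemma simulated_pair f F G x y z :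
  simulated f F x y -> simulated f G x z -> simulated f (cPair F G) x (cpair y z).
Proof.
  intros [tr1 [ok1 [S1 _]]] [tr2 [ok2 [S2 _]]].
  exists (tr1 ++ tr2). split; [apply Forall_app; auto |]. split; [| discriminate].
  intros cn Hcn K. destruct (step_eval_pair cn F G Hcn) as [Fn [Gn [HF [HG Hs]]]].
  destruct (S1 Fn HF (push (frPairL Gn x) K)) as [R1 A1].
  destruct (S2 Gn HG (push (frPairR y) K)) as [R2 A2].
  split.
  - eapply runs_step; [intro; apply Hs |].
    eapply runs_snoc_nil; [| intro; apply step_return_pairR].
    eapply runs_app; [exact R1 |]. eapply runs_step; [intro; apply step_return_pairL | exact R2].
  - eapply asks_step; [intro; apply Hs |]. eapply asks_app; [exact R1 | exact A1 |].
    eapply asks_step; [intro; apply step_return_pairL | exact A2].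
Qed.

Lemma simulated_comp f F G x y z :
  simulated f G x y -> simulated f F y z -> simulated f (cComp F G) x z.
Proof.
  intros [tr1 [ok1 [S1 _]]] [tr2 [ok2 [S2 _]]].
  exists (tr1 ++ tr2). split; [apply Forall_app; auto |]. split; [| discriminate].
  intros cn Hcn K. destruct (step_eval_comp cn F G Hcn) as [Fn [Gn [HF [HG Hs]]]].
  destruct (S1 Gn HG (push (frComp Fn) K)) as [R1 A1]. destruct (S2 Fn HF K) as [R2 A2].
  split.
  - eapply runs_step; [intro; apply Hs |]. eapply runs_app; [exact R1 |].
    eapply runs_step; [intro; apply step_return_comp | exact R2].
  - eapply asks_step; [intro; apply Hs |]. eapply asks_app; [exact R1 | exact A1 |].
    eapply asks_step; [intro; apply step_return_comp | exact A2].
Qed.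

Lemma simulated_of_recurses f F G tr z y : answered_by f tr ->
  (forall Fn Gn, decode Fn = F -> decode Gn = G -> machine_recurses tr Fn Gn (pfst z) (psnd z) y) ->
  simulated f (cRec F G) z y.
Proof.
  intros ok HR. exists tr. split; [exact ok |]. split.
  - intros cn Hcn K. destruct (step_eval_rec cn F G Hcn) as [Fn [Gn [HF [HG Hs]]]].
    destruct (HR Fn Gn HF HG (psnd z) (le_n _) K) as [R A]. split.
    + eapply runs_step; [intro; apply Hs |].
      eapply runs_snoc_nil; [exact R | intro; apply step_return_rec_done].
    + eapply asks_step; [intro; apply Hs | exact A].
  - intros F' G' Fn Gn E. injection E as <- <-. apply HR.
Qed.

Lemma simulated_rec0 f F G x z y :
  Cantor.of_nat z = (x, 0) -> simulated f F x y -> simulated f (cRec F G) z y.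
Proof.
  intros Hz [tr [ok [S1 _]]]. apply (simulated_of_recurses _ _ _ tr); [exact ok |].
  unfold pfst, psnd; rewrite Hz; cbn [fst snd].
  intros Fn Gn HF HG N _ K. apply S1, HF.
Qed.

Lemma simulated_recS f F G x n z w y : Cantor.of_nat z = (x, S n) ->
  simulated f (cRec F G) (cpair x n) w -> simulated f G (cpair (cpair x n) w) y ->
  simulated f (cRec F G) z y.
Proof.
  intros Hz [tr1 [ok1 [_ Rec1]]] [tr2 [ok2 [S2 _]]].
  apply (simulated_of_recurses _ _ _ (tr1 ++ tr2)); [apply Forall_app; auto |].
  unfold pfst at 1, psnd at 1; rewrite Hz; cbn [fst snd].
  intros Fn Gn HF HG N HN K.
  specialize (Rec1 F G Fn Gn eq_refl HF HG). rewrite pfst_cpair, psnd_cpair in Rec1.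
  destruct (Rec1 N ltac:(lia) K) as [R1 A1].
  destruct (S2 Gn HG (push (frRec Gn x (S n) N) K)) as [R2 A2].
  split.
  - eapply runs_app; [exact R1 |].
    eapply runs_step; [intro; apply step_return_rec_next; lia | exact R2].
  - eapply asks_app; [exact R1 | exact A1 |].
    eapply asks_step; [intro; apply step_return_rec_next; lia | exact A2].
Qed.

Lemma mu_search f F x j :
  (forall m, m < j -> exists k, simulated f F (cpair x m) (S k)) ->
  exists tr, answered_by f tr /\ forall Fn, decode Fn = F -> forall K,
    runs tr (fun L => state 0 (cpair Fn (cpair x 0)) (push (frMu Fn x 0) K) L)
            (fun L => state 0 (cpair Fn (cpair x j)) (push (frMu Fn x j) K) L) /\
    asks tr (fun L => state 0 (cpair Fn (cpair x 0)) (push (frMu Fn x 0) K) L).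
Proof.
  induction j as [|j IH]; intro Hlt.
  - exists []. split; [constructor |]. intros; split; [apply runs_nil | apply asks_nil].
  - destruct IH as [trj [okj Hj]]; [intros m Hm; apply Hlt; lia |].
    destruct (Hlt j ltac:(lia)) as [k [trm [okm [Sm _]]]].
    exists (trj ++ trm). split; [apply Forall_app; auto |].
    intros Fn HF K. destruct (Hj Fn HF K) as [R1 A1].
    destruct (Sm Fn HF (push (frMu Fn x j) K)) as [R2 A2].
    split.
    + eapply runs_snoc_nil; [eapply runs_app; [exact R1 | exact R2] |].
      intro; apply step_return_mu_succ.
    + eapply asks_app; [exact R1 | exact A1 | exact A2].
Qed.

Lemma simulated_mu f F x n :
  simulated f F (cpair x n) 0 ->
  (forall m, m < n -> exists k, simulated f F (cpair x m) (S k)) ->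
  simulated f (cMu F) x n.
Proof.
  intros [tr0 [ok0 [S0 _]]] Hlt. destruct (mu_search f F x n Hlt) as [trn [okn Hn]].
  exists (trn ++ tr0). split; [apply Forall_app; auto |]. split; [| discriminate].
  intros cn Hcn K. destruct (step_eval_mu cn F Hcn) as [Fn [HF Hs]].
  destruct (Hn Fn HF K) as [R1 A1]. destruct (S0 Fn HF (push (frMu Fn x n) K)) as [R2 A2].
  split.
  - eapply runs_step; [intro; apply Hs |].
    eapply runs_snoc_nil; [eapply runs_app; [exact R1 | exact R2] |].
    intro; apply step_return_mu_zero.
  - eapply asks_step; [intro; apply Hs |]. eapply asks_app; [exact R1 | exact A1 | exact A2].
Qed.

Theorem eval_simulated f c x y : eval f c x y -> simulated f c x y.
Proof.
  intro H. induction H using eval_ind_nested.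
  - apply simulated_leaf; [intros; apply step_eval_zero; auto | discriminate].
  - apply simulated_leaf; [intros; apply step_eval_succ; auto | discriminate].
  - apply simulated_leaf; [intros; apply step_eval_id; auto | discriminate].
  - apply simulated_leaf; [intros; apply step_eval_fst; auto | discriminate].
  - apply simulated_leaf; [intros; apply step_eval_snd; auto | discriminate].
  - now apply simulated_oracle.
  - now apply simulated_pair.
  - eapply simulated_comp; eauto.
  - eapply simulated_rec0; eauto.
  - eapply simulated_recS; eauto.
  - apply simulated_mu; [assumption |].
    intros m Hm. destruct (H0 m Hm) as [k [_ Hk]]. eauto.
Qed.

(** * Running the machine inside [K1] *)

Lemma eval_mu_first f F x (g : nat -> nat) N :
  (forall n, n <= N -> eval f F (cpair x n) (g n)) -> g N = 0 ->
  (forall m, m < N -> g m <> 0) -> eval f (cMu F) x N.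
Proof.
  intros HF H0 Hlt. apply ev_mu; [rewrite <- H0; apply HF, le_n |].
  intros m Hm. destruct (g m) as [|k] eqn:E; [now destruct (Hlt m Hm) |].
  exists k. rewrite <- E. apply HF. lia.
Qed.

Lemma iter_fixpoint (g : nat -> nat) n s : g s = s -> Nat.iter n g s = s.
Proof. intro H. induction n as [|n IH]; [reflexivity |]. now rewrite Nat.iter_succ, IH. Qed.

Definition halted (s : nat) : Prop := 2 <= pfst s.

Lemma step_halted_state s : halted s -> step s = s.
Proof.
  intro H. rewrite <- (cpair_pfst_psnd s), <- (cpair_pfst_psnd (psnd s)),
    <- (cpair_pfst_psnd (psnd (psnd s))).
  apply step_halted, H.
Qed.

Definition EInitial := EState 0 (EPair (EFst EVar) (EFst (ESnd EVar))) EZero (ESnd (ESnd EVar)).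

Lemma denote_initial a x L : denote EInitial (cpair a (cpair x L)) = state 0 (cpair a x) 0 L.
Proof.
  unfold EInitial, EState, state. cbn [denote].
  now repeat rewrite ?pfst_cpair, ?psnd_cpair, ?denote_const.
Qed.

Definition cSteps := cRec (compile EInitial) (cComp (compile EStep) cSnd).

Lemma cSteps_computes f z n : eval f cSteps (cpair z n) (Nat.iter n step (denote EInitial z)).
Proof.
  apply (eval_rec_iter f _ _ z n (fun j => Nat.iter j step (denote EInitial z))).
  - apply compile_computes.
  - intros k _. eapply ev_comp; [apply eval_snd_cpair | apply compile_computes].
Qed.

Definition EHaltTest := EIfz (ESub (EConst 2) (EFst EVar)) EZero (EConst 1).

Lemma denote_halt_test s : denote EHaltTest s = 0 <-> halted s.
Proof.
  unfold EHaltTest, halted. cbn [denote]. rewrite !denote_const.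
  destruct (2 - pfst s) eqn:E; split; intro H; lia.
Qed.

Definition cRunToHalt := cComp cSteps (cPair cId (cMu (cComp (compile EHaltTest) cSteps))).

Lemma eval_run_to_halt f z s : reaches (denote EInitial z) s -> halted s -> eval f cRunToHalt z s.
Proof.
  intros [k Hk] Hs.
  set (g n := denote EHaltTest (Nat.iter n step (denote EInitial z))).
  destruct (dec_inh_nat_subset_has_unique_least_element (fun n => g n = 0))
    as [N [[HN Hleast] _]].
  { intro n. destruct (Nat.eq_dec (g n) 0); auto. }
  { exists k. unfold g. rewrite Hk. apply denote_halt_test, Hs. }
  assert (HsN : Nat.iter N step (denote EInitial z) = s).
  { assert (N <= k) by (apply Hleast; unfold g; rewrite Hk; apply denote_halt_test, Hs).
    rewrite <- Hk. replace k with ((k - N) + N) by lia. rewrite Nat.iter_add.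
    symmetry. apply iter_fixpoint, step_halted_state, denote_halt_test, HN. }
  unfold cRunToHalt. eapply ev_comp; [apply ev_pair; [apply ev_id |] |].
  2: { rewrite <- HsN. apply cSteps_computes. }
  apply (eval_mu_first f _ _ g); [| exact HN |].
  - intros n _. eapply ev_comp; [apply cSteps_computes | apply compile_computes].
  - intros m Hm E. specialize (Hleast m E). lia.
Qed.

(* A code with holes for a code whose number [k] is only known at run time; [template_expr]
   computes the number of the filled-in code from [k]. *)
Inductive template : Type :=
| tHole | tCode (c : code) | tPair (a b : template) | tComp (a b : template)
| tRec (a b : template) | tMu (a : template).

Fixpoint plug (t : template) (k : nat) : code :=
  match t with
  | tHole => decode k
  | tCode c => c
  | tPair a b => cPair (plug a k) (plug b k)
  | tComp a b => cComp (plug a k) (plug b k)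
  | tRec a b => cRec (plug a k) (plug b k)
  | tMu a => cMu (plug a k)
  end.

Fixpoint template_expr (t : template) : expr :=
  match t with
  | tHole => EVar
  | tCode c => EConst (encode c)
  | tPair a b => ESucc (EAdd (EMul10 (EPair (template_expr a) (template_expr b))) (EConst 6))
  | tComp a b => ESucc (EAdd (EMul10 (EPair (template_expr a) (template_expr b))) (EConst 7))
  | tRec a b => ESucc (EAdd (EMul10 (EPair (template_expr a) (template_expr b))) (EConst 8))
  | tMu a => ESucc (EAdd (EMul10 (template_expr a)) (EConst 9))
  end.

Lemma decode_template_expr t k : decode (denote (template_expr t) k) = plug t k.
Proof.
  induction t; cbn [template_expr denote plug]; rewrite ?denote_const.
  - reflexivity.
  - apply decode_encode.
  - rewrite decode_pair_num. congruence.
  - rewrite decode_comp_num. congruence.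
  - rewrite decode_rec_num. congruence.
  - rewrite decode_mu_num. congruence.
Qed.

Definition tIfz t A B := tComp (tRec A (tComp B (tCode (cComp cFst cFst)))) (tPair (tCode cId) t).

Lemma plug_tIfz t A B k : plug (tIfz t A B) k = cIfz (plug t k) (plug A k) (plug B k).
Proof. reflexivity. Qed.

Notation no_oracle := (fun _ : nat => @None nat).

Lemma K1_app_functional a b c1 c2 : Defs.app K1 a b c1 -> Defs.app K1 a b c2 -> c1 = c2.
Proof. apply eval_functional. Qed.

Lemma K1_app2_functional a b c d1 d2 : app2 K1 a b c d1 -> app2 K1 a b c d2 -> d1 = d2.
Proof.
  intros [e1 [H1 H1']] [e2 [H2 H2']].
  rewrite (K1_app_functional _ _ _ _ H1 H2) in H1'. exact (K1_app_functional _ _ _ _ H1' H2').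
Qed.

Lemma booleans_distinct T F : is_booleans K1 T F -> T <> F.
Proof.
  intros Hb <-. destruct (Hb 0 1) as [H0 H1].
  pose proof (K1_app2_functional _ _ _ _ _ H0 H1). discriminate.
Qed.

Lemma booleans_const T F : is_booleans K1 T F -> forall a, exists k,
  eval no_oracle (decode T) a k /\ forall y, eval no_oracle (decode k) y a.
Proof.
  intros Hb a. destruct (Hb a 0) as [[k [Hk _]] _]. exists k. split; [exact Hk |].
  intro y. destruct (Hb a y) as [[e [He Hy]] _].
  now rewrite (K1_app_functional _ _ _ _ He Hk) in Hy.
Qed.

Lemma pairing_partial p X : is_pairing K1 p -> exists j, forall v, exists w,
  eval no_oracle (decode j) v w /\ app2 K1 p X v w.
Proof.
  intros [Hp _]. destruct (Hp X 0) as [c0 [j [Hj _]]]. exists j. intro v.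
  destruct (Hp X v) as [w [e [He Hw]]]. exists w.
  rewrite (K1_app_functional _ _ _ _ He Hj) in Hw. split; [exact Hw |]. now exists j.
Qed.

(** * Simulating [K1^f] in [K1[f]] *)

Section Simulation.
Variables (T F p jT jF : nat).
Hypothesis HjT : forall v, exists w, eval no_oracle (decode jT) v w /\ app2 K1 p T v w.
Hypothesis HjF : forall v, exists w, eval no_oracle (decode jF) v w /\ app2 K1 p F v w.

(* On a halted state: [p T a] for a result [a], [p F v] for a query [v]. *)
Definition cReport := cIfz (compile (ESub (EFst EVar) (EConst 2)))
  (cComp (decode jT) (compile ERegister)) (cComp (decode jF) (compile ERegister)).

Lemma eval_tag_minus2 f t a k l :
  eval f (compile (ESub (EFst EVar) (EConst 2))) (state t a k l) (t - 2).
Proof.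
  replace (t - 2) with (denote (ESub (EFst EVar) (EConst 2)) (state t a k l)).
  - apply compile_computes.
  - cbn [denote]. unfold state. now rewrite denote_const, pfst_cpair.
Qed.

Lemma eval_register f t a k l : eval f (compile ERegister) (state t a k l) a.
Proof.
  replace a with (denote ERegister (state t a k l)) at 2.
  - apply compile_computes.
  - unfold ERegister, state. cbn [denote]. now rewrite psnd_cpair, pfst_cpair.
Qed.

Lemma eval_report_result a k l w :
  eval no_oracle (decode jT) a w -> eval no_oracle cReport (state 2 a k l) w.
Proof.
  intro H. apply eval_ifz_zero; [apply (eval_tag_minus2 _ 2) |].
  eapply ev_comp; [apply eval_register | exact H].
Qed.

Lemma eval_report_query a k l w :
  eval no_oracle (decode jF) a w -> eval no_oracle cReport (state 3 a k l) w.
Proof.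
  intro H. destruct (HjT a) as [wt [Ht _]].
  eapply (eval_ifz_succ _ _ _ _ _ 0); [apply (eval_tag_minus2 _ 3) | |].
  - eapply ev_comp; [apply eval_register | exact Ht].
  - eapply ev_comp; [apply eval_register | exact H].
Qed.

(* Filled with a code [k] constantly equal to [a], this answers [[a'] * u] by running [a] on
   [a'] against the answers [u]. *)
Definition tAnswer := tComp (tCode cReport) (tComp (tCode cRunToHalt) (tPair tHole (tCode cPred))).

Lemma eval_answer k a a' L s w : (forall y, eval no_oracle (decode k) y a) ->
  reaches (state 0 (cpair a a') 0 L) s -> halted s -> eval no_oracle cReport s w ->
  eval no_oracle (plug tAnswer k) (S (cpair a' L)) w.
Proof.
  intros Hk Hr Hs Hw. cbn [plug tAnswer]. eapply ev_comp; [| exact Hw].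
  eapply ev_comp; [apply ev_pair; [apply Hk | apply cPred_computes] |].
  apply eval_run_to_halt; [| exact Hs]. cbn [pred]. now rewrite denote_initial.
Qed.

Lemma K1_app_answer k a' l w :
  eval no_oracle (plug tAnswer k) (S (cpair a' (seqcode l))) w ->
  Defs.app K1 (denote (template_expr tAnswer) k) (seqcode (a' :: l)) w.
Proof. intro H. cbn [Defs.app K1 K1f]. unfold phi. now rewrite decode_template_expr. Qed.

Lemma answer_dialogue f k a a' tr :
  (forall y, eval no_oracle (decode k) y a) -> answered_by f tr ->
  asks tr (fun L => state 0 (cpair a a') 0 L) ->
  dialogue T F p f (denote (template_expr tAnswer) k) a' (answers tr).
Proof.
  intros Hk ok A i Hi. unfold answers in Hi. rewrite length_map in Hi.
  destruct (A i Hi) as [K [L HR]].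
  set (v := fst (nth i tr (0, 0))). destruct (HjF v) as [w [Hw Hpw]].
  exists v, w. split; [| split; [exact Hpw |]].
  - apply K1_app_answer. eapply eval_answer; [exact Hk | | | apply eval_report_query, Hw].
    + unfold answers in *. rewrite firstn_map. exact HR.
    + unfold halted, state. rewrite pfst_cpair. lia.
  - unfold answered_by in ok. rewrite Forall_nth in ok.
    unfold answers, v. rewrite (ok i (0, 0) Hi). f_equal. symmetry. apply (map_nth snd tr (0, 0) i).
Qed.

Lemma app_rel_answer f k a a' c : (forall y, eval no_oracle (decode k) y a) ->
  eval f (decode a) a' c -> app_rel T F p f (denote (template_expr tAnswer) k) a' c.
Proof.
  intros Hk Hev. destruct (eval_simulated _ _ _ _ Hev) as [tr [ok [Sim _]]].
  destruct (Sim a eq_refl 0) as [R A].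
  destruct (HjT c) as [w [Hw Hpw]].
  exists (answers tr), w. split; [eapply answer_dialogue; eauto |]. split; [| exact Hpw].
  apply K1_app_answer. eapply eval_answer; [exact Hk | | | apply eval_report_result, Hw].
  - eapply reaches_trans; [| exists 1; apply step_return_empty].
    pose proof (R []) as R0. rewrite app_nil_r in R0. exact R0.
  - unfold halted, state. rewrite pfst_cpair. lia.
Qed.

(* [a] is sent to [T a], a code constantly [a], then to the number of [plug tAnswer (T a)];
   the dialogue of [r a] is empty. *)
Definition cRealizer :=
  cComp (decode jT) (cComp (compile (template_expr tAnswer)) (cComp (decode T) (cComp cFst cPred))).

Lemma realizer_app_rel f : is_booleans K1 T F ->
  forall a a' c, phi f a a' c -> app2 (K1rel T F p f) (encode cRealizer) a a' c.
Proof.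
  intros Hb a a' c Hc. destruct (booleans_const T F Hb a) as [k [HTa Hk]].
  exists (denote (template_expr tAnswer) k). split.
  - destruct (HjT (denote (template_expr tAnswer) k)) as [w [Hw Hpw]].
    exists [], w. split; [intros i Hi; simpl in Hi; lia |]. split; [| exact Hpw].
    cbn [Defs.app K1 K1f]. unfold phi. rewrite decode_encode. unfold cRealizer.
    eapply ev_comp; [| exact Hw]. eapply ev_comp; [| apply compile_computes].
    eapply ev_comp; [| exact HTa].
    apply (ev_comp _ _ _ _ (cpair a 0)); [apply cPred_computes | apply eval_fst_cpair].
  - eapply app_rel_answer; eauto.
Qed.
End Simulation.

(** * Running dialogues in [K1^f] *)

Lemma firstn_succ_snoc (l : list nat) k : k < length l -> firstn (S k) l = firstn k l ++ [nth k l 0].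
Proof.
  revert k. induction l as [|x l IH]; intros k Hk; simpl in Hk; [lia |].
  destruct k; [reflexivity |]. simpl. f_equal. apply IH. lia.
Qed.

Lemma length_le_seqcode l : length l <= seqcode l.
Proof. induction l as [|x l IH]; simpl; [lia |]. pose proof (add_le_cpair x (seqcode l)). lia. Qed.

(* Moves the head of the list in the second component onto the list in the first. *)
Definition ERevStep := EIfz (ESnd EVar) EVar
  (EPair (ESucc (EPair (EFst (EPred (ESnd EVar))) (EFst EVar))) (ESnd (EPred (ESnd EVar)))).

(* [seqcode l] bounds the length of [l], so that many steps suffice. *)
Definition ERev e := EFst (EIter ERevStep (EPair EZero e) e).

Lemma iter_rev_step l : forall acc m, length l <= m ->
  Nat.iter m (denote ERevStep) (cpair (seqcode acc) (seqcode l)) = cpair (seqcode (rev l ++ acc)) 0.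
Proof.
  induction l as [|x l IH]; intros acc m Hm.
  - apply iter_fixpoint. unfold ERevStep. cbn [denote]. now rewrite psnd_cpair.
  - destruct m as [|m]; simpl in Hm; [lia |]. rewrite Nat.iter_succ_r.
    replace (denote ERevStep (cpair (seqcode acc) (seqcode (x :: l))))
      with (cpair (seqcode (x :: acc)) (seqcode l)).
    + rewrite IH by lia. simpl. now rewrite <- app_assoc.
    + unfold ERevStep. cbn [denote seqcode]. rewrite !psnd_cpair. cbn [pred].
      now rewrite !pfst_cpair, !psnd_cpair.
Qed.

Lemma denote_rev e x l : denote e x = seqcode l -> denote (ERev e) x = seqcode (rev l).
Proof.
  intro H. unfold ERev. cbn [denote]. rewrite H. change 0 with (seqcode []).
  rewrite iter_rev_step by apply length_le_seqcode. now rewrite pfst_cpair, app_nil_r.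
Qed.

(* The loop state after [k] rounds of the dialogue of [b] with [b'], given the answers [l]:
   a flag [running] (1 while running, 0 once finished), the answers so far in reverse order,
   and the result. *)
Definition loop_state (b' k : nat) (l : list nat) (running res : nat) :=
  cpair (cpair b' k) (cpair running (cpair (seqcode (rev (firstn k l))) res)).

Definition ERunning := EFst (ESnd EVar).
Definition EAnswersRev := EFst (ESnd (ESnd EVar)).
Definition EQuestion := ESucc (EPair (EFst (EFst EVar)) (ERev EAnswersRev)).

Lemma eval_running f b' k l running r : eval f (compile ERunning) (loop_state b' k l running r) running.
Proof.
  replace running with (denote ERunning (loop_state b' k l running r)) at 2.
  - apply compile_computes.
  - unfold ERunning, loop_state. cbn [denote]. now rewrite !psnd_cpair, !pfst_cpair.
Qed.

Lemma eval_answers_rev f b' k l running r :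
  eval f (compile EAnswersRev) (loop_state b' k l running r) (seqcode (rev (firstn k l))).
Proof.
  replace (seqcode (rev (firstn k l))) with (denote EAnswersRev (loop_state b' k l running r)).
  - apply compile_computes.
  - unfold EAnswersRev, loop_state. cbn [denote]. now rewrite !psnd_cpair, !pfst_cpair.
Qed.

Lemma eval_question f b' k l running r :
  eval f (compile EQuestion) (loop_state b' k l running r) (seqcode (b' :: firstn k l)).
Proof.
  replace (seqcode (b' :: firstn k l)) with (denote EQuestion (loop_state b' k l running r)).
  - apply compile_computes.
  - unfold EQuestion, loop_state. cbn [denote seqcode]. rewrite !pfst_cpair. f_equal. f_equal.
    rewrite <- (rev_involutive (firstn k l)) at 2. apply denote_rev.
    unfold EAnswersRev. cbn [denote]. now rewrite !psnd_cpair, !pfst_cpair.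
Qed.

Lemma eval_is_const f n x : eval f (compile (EEqb EVar (EConst n))) x (eqb01 x n).
Proof.
  pose proof (compile_computes (EEqb EVar (EConst n)) f x) as H.
  cbn [denote] in H. now rewrite denote_const in H.
Qed.

Section Dialogue.
Variables (T F p : nat) (f : nat -> option nat) (p0 p1 : nat).
Hypothesis Hproj : forall a b c, app2 K1 p a b c -> Defs.app K1 p0 c a /\ Defs.app K1 p1 c b.
Hypothesis HTF : T <> F.

(* The hole is filled with [b]; [tReply] is [b ([b'] * u)] for the answers [u] so far. *)
Definition tReply := tComp tHole (tCode (compile EQuestion)).
Definition tReplyValue := tComp (tCode (decode p1)) tReply.
Definition tReplyIsFinal := tComp (tCode (compile (EEqb EVar (EConst T))))
  (tComp (tCode (decode p0)) tReply).
Definition tFinish := tPair (tCode cZero) (tPair (tCode (compile EAnswersRev)) tReplyValue).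
Definition tAsk := tPair (tCode (cConst 1))
  (tPair (tComp (tCode cSucc) (tPair (tComp (tCode cOracle) tReplyValue) (tCode (compile EAnswersRev))))
         (tCode cZero)).
Definition tRound := tIfz (tCode (compile ERunning)) (tCode cSnd) (tIfz tReplyIsFinal tFinish tAsk).
Definition tLoop := tRec (tCode (cPair (cConst 1) (cPair cZero cZero))) tRound.
Definition tDialogue := tComp (tCode (cComp cSnd cSnd))
  (tComp tLoop (tPair (tCode cId) (tMu (tComp (tCode cFst) tLoop)))).

Variables (b b' : nat) (l : list nat).

Lemma eval_reply k w : eval no_oracle (decode b) (seqcode (b' :: firstn k l)) w ->
  eval f (plug tReply b) (loop_state b' k l 1 0) w.
Proof.
  intro H. cbn [tReply plug]. eapply ev_comp; [apply eval_question | apply eval_no_oracle, H].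
Qed.

Lemma eval_round_query k w v : k < length l ->
  eval no_oracle (decode b) (seqcode (b' :: firstn k l)) w -> app2 K1 p F v w ->
  f v = Some (nth k l 0) ->
  eval f (plug tRound b) (loop_state b' k l 1 0)
    (cpair 1 (cpair (seqcode (rev (firstn (S k) l))) 0)).
Proof.
  intros Hk Hw Hpv Hf. destruct (Hproj _ _ _ Hpv) as [H0 H1].
  assert (Hv : eval f (plug tReplyValue b) (loop_state b' k l 1 0) v).
  { cbn [tReplyValue plug]. eapply ev_comp; [apply eval_reply, Hw | apply eval_no_oracle, H1]. }
  unfold tRound. rewrite !plug_tIfz.
  eapply (eval_ifz_succ _ _ _ _ _ 0); [apply eval_running | apply ev_snd |].
  eapply (eval_ifz_succ _ _ _ _ _ 0).
  - cbn [tReplyIsFinal plug].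
    eapply ev_comp; [eapply ev_comp; [apply eval_reply, Hw | apply eval_no_oracle, H0] |].
    pose proof (eval_is_const f T F) as Ht. unfold eqb01 in *.
    now rewrite (proj2 (Nat.eqb_neq F T) (not_eq_sym HTF)) in Ht.
  - cbn [tFinish plug]. apply ev_pair; [apply ev_zero | apply ev_pair; [apply eval_answers_rev | exact Hv]].
  - cbn [tAsk plug]. rewrite firstn_succ_snoc, rev_app_distr by exact Hk. cbn [rev app seqcode].
    apply ev_pair; [apply cConst_computes |]. apply ev_pair; [| apply ev_zero].
    eapply ev_comp; [| apply ev_succ]. apply ev_pair; [| apply eval_answers_rev].
    eapply ev_comp; [exact Hv | apply ev_oracle, Hf].
Qed.

Lemma eval_round_final w c :
  eval no_oracle (decode b) (seqcode (b' :: l)) w -> app2 K1 p T c w ->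
  eval f (plug tRound b) (loop_state b' (length l) l 1 0) (cpair 0 (cpair (seqcode (rev l)) c)).
Proof.
  intros Hw Hpc. destruct (Hproj _ _ _ Hpc) as [H0 H1].
  rewrite <- (firstn_all l) in Hw.
  unfold tRound. rewrite !plug_tIfz.
  eapply (eval_ifz_succ _ _ _ _ _ 0); [apply eval_running | apply ev_snd |].
  apply eval_ifz_zero.
  - cbn [tReplyIsFinal plug].
    eapply ev_comp; [eapply ev_comp; [apply eval_reply, Hw | apply eval_no_oracle, H0] |].
    pose proof (eval_is_const f T T) as Ht. unfold eqb01 in Ht. now rewrite Nat.eqb_refl in Ht.
  - cbn [tFinish plug]. apply ev_pair; [apply ev_zero |].
    replace (seqcode (rev l)) with (seqcode (rev (firstn (length l) l))) by now rewrite firstn_all.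
    apply ev_pair; [apply eval_answers_rev |].
    cbn [tReplyValue plug]. eapply ev_comp; [apply eval_reply, Hw | apply eval_no_oracle, H1].
Qed.

Definition loop_value (c j : nat) : nat :=
  if j <=? length l then cpair 1 (cpair (seqcode (rev (firstn j l))) 0)
  else cpair 0 (cpair (seqcode (rev l)) c).

Section Run.
Variables (w c : nat).
Hypothesis Hdia : dialogue T F p f b b' l.
Hypothesis Hw : Defs.app K1 b (seqcode (b' :: l)) w.
Hypothesis Hc : app2 K1 p T c w.

Lemma eval_loop m : m <= S (length l) -> eval f (plug tLoop b) (cpair b' m) (loop_value c m).
Proof.
  intro Hm. cbn [tLoop plug]. apply eval_rec_iter.
  - apply ev_pair; [apply cConst_computes | apply ev_pair; apply ev_zero].
  - intros k Hk. unfold loop_value at 1.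
    rewrite (proj2 (Nat.leb_le k (length l))) by lia. fold (loop_state b' k l 1 0).
    destruct (Nat.eq_dec k (length l)) as [-> | Hne].
    + unfold loop_value. rewrite (proj2 (Nat.leb_gt (S (length l)) (length l))) by lia.
      exact (eval_round_final w c Hw Hc).
    + unfold loop_value. rewrite (proj2 (Nat.leb_le (S k) (length l))) by lia.
      destruct (Hdia k ltac:(lia)) as [v [wq [Hwq [Hpv Hfv]]]].
      apply (eval_round_query k wq v); [lia | exact Hwq | exact Hpv | exact Hfv].
Qed.

Lemma eval_dialogue : eval f (plug tDialogue b) b' c.
Proof.
  assert (Hlast : loop_value c (S (length l)) = cpair 0 (cpair (seqcode (rev l)) c)).
  { unfold loop_value. now rewrite (proj2 (Nat.leb_gt (S (length l)) (length l))) by lia. }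
  cbn [tDialogue plug]. eapply ev_comp.
  - eapply ev_comp; [apply ev_pair; [apply ev_id |] | apply eval_loop, le_n].
    apply (eval_mu_first f _ _ (fun m => pfst (loop_value c m))).
    + intros m Hm. eapply ev_comp; [apply eval_loop, Hm | apply ev_fst].
    + now rewrite Hlast, pfst_cpair.
    + intros m Hm. unfold loop_value. rewrite (proj2 (Nat.leb_le m (length l))) by lia.
      now rewrite pfst_cpair.
  - rewrite Hlast. eapply ev_comp; apply eval_snd_cpair.
Qed.
End Run.
End Dialogue.

(** * The isomorphism *)

Lemma id_morph_comp A : Defs.morph_eq (comp_morph (id_morph A) (id_morph A)) (id_morph A).
Proof.
  intros a c. unfold comp_morph, id_morph. split.
  - now intros [b [-> ->]].
  - intros ->. now exists a.
Qed.

Lemma id_applicative_K1f_K1rel T F p f :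
  is_booleans K1 T F -> is_pairing K1 p -> applicative_morphism (K1f f) (K1rel T F p f) (id_morph nat).
Proof.
  intros Hb Hp. destruct (pairing_partial p T Hp) as [jT HjT].
  destruct (pairing_partial p F Hp) as [jF HjF].
  split; [intro a; now exists a |]. exists (encode (cRealizer T jT jF)).
  intros a a' c b b' Hc -> ->. exists c. split; [| reflexivity].
  now apply (realizer_app_rel T F p jT jF).
Qed.

Lemma id_applicative_K1rel_K1f T F p f :
  is_booleans K1 T F -> is_pairing K1 p -> applicative_morphism (K1rel T F p f) (K1f f) (id_morph nat).
Proof.
  intros Hb [_ [p0 [p1 Hproj]]]. pose proof (booleans_distinct T F Hb) as HTF.
  split; [intro a; now exists a |].
  exists (encode (compile (template_expr (tDialogue T p0 p1)))).
  intros b b' c b0 b0' [l [w [Hdia [Hw Hc]]]] -> ->. exists c. split; [| reflexivity].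
  exists (denote (template_expr (tDialogue T p0 p1)) b). cbn [Defs.app K1f]. unfold phi. split.
  - rewrite decode_encode. apply compile_computes.
  - rewrite decode_template_expr. eapply eval_dialogue; eauto.
Qed.

Theorem mainTheorem5 :
  forall (T F p : nat),
    is_booleans K1 T F -> is_pairing K1 p ->
    forall f : nat -> option nat,
      pca_isomorphic (K1f f) (K1rel T F p f).
Proof.
  intros T F p Hb Hp f. exists (id_morph nat), (id_morph nat).
  split; [now apply id_applicative_K1f_K1rel |].
  split; [now apply id_applicative_K1rel_K1f |].
  split; apply id_morph_comp.
Qed.
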